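(* Fix $F\in\mathcal S^\sharp$ with its $\gamma$, and let $C>0$. Let $t<0$ with $|t|\le C$, $s=x+iy$ with $y>0$ and $|x|\le Cy^{1/4}$, and let $n$ be an integer with $1\le n\le\exp(y^{3/5}/|t|)$. Put $\mathcal I(z):=\gamma(z)e^{\frac{1}{|t|}(J_t(s)-z)^2}n^{-z}$. There exist $y_0,K>0$ depending only on $C,F,\gamma$ such that for all such $t,s,n$ with $y\ge y_0$: (i) if $|x-\Re z|\le y^{3/5}$ and $\tfrac12y^{2/3}\le|y-\Im z|\le2y^{2/3}$, then $|\mathcal I(z)|\le K\exp\!\left(-\frac{y^{4/3}}{10|t|}\right)$; (ii) if $\Re z=2$ and $|y-\Im z|\ge y^{2/3}$, then $|\mathcal I(z)|\le K\exp\!\left(-\frac{1}{2|t|}(y-\Im z)^2\right)$.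
   Context: $\operatorname{Log}$ denotes the principal branch of the logarithm. The extended Selberg class $\mathcal S^\sharp$ is the set of functions $F$, not identically zero, such that: (i) $F(s)=\sum_{n\ge1}a_n n^{-s}$, with the series converging absolutely for $\Re s>1$; (ii) $(s-1)^mF(s)$ extends to an entire function of finite order for some integer $m\ge0$; (iii) letting $m$ be the order of the pole of $F$ at $s=1$ ($m=0$ if there is no pole), there is a function $\gamma(s)=\alpha s^m(s-1)^mQ^s\prod_{i=1}^k\Gamma(\omega_i s+\mu_i)$ with $\alpha\in\mathbb C\setminus\{0\}$, $Q>0$, an integer $k\ge1$, $\omega_i>0$ and $\mu_i\in\mathbb C$ with $\Re\mu_i\ge0$, such that the (entire) function $\xi^F(s):=\gamma(s)F(s)$ satisfies $\xi^F(s)=\overline{\xi^F(1-\bar s)}$ for all $s$. For $t<0$ and $\Im s>0$: $J_t(s):=s+\frac{|t|}{2}\log Q+\frac{|t|}{2}\sum_{i=1}^k\omega_i\operatorname{Log}(\omega_i s)$. *)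

From Stdlib Require Import Reals Factorial.
From Coquelicot Require Import Coquelicot Complex.
Open Scope R_scope.

Definition Cexp (z : C) : C :=
  (exp (Re z) * cos (Im z), exp (Re z) * sin (Im z)).

(* Principal argument in (-pi, pi] (junk at 0). *)
Definition Carg (z : C) : R :=
  if Rle_dec 0 (Im z) then acos (Re z / Cmod z) else - acos (Re z / Cmod z).

Definition CLog (z : C) : C := (ln (Cmod z), Carg z).

Definition Crpow (a : R) (z : C) : C := Cexp (z * RtoC (ln a))%C.

Fixpoint Cprod (k : nat) (f : nat -> C) : C :=
  match k with O => 1%C | S k' => (Cprod k' f * f k')%C end.

Fixpoint Csum (k : nat) (f : nat -> C) : C :=
  match k with O => 0%C | S k' => (Csum k' f + f k')%C end.

Definition gauss_seq (z : C) (N : nat) : C :=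
  (Crpow (INR N) z * RtoC (INR (fact N)) /
     Cprod (S N) (fun j => z + RtoC (INR j)))%C.

(* Complex Gamma function, Gamma(z) = lim_N gauss_seq z N
   (Euler/Gauss limit formula, valid for z not in {0,-1,-2,...}). *)
Definition CGamma (z : C) : C :=
  (real (Lim_seq (fun N => Re (gauss_seq z N))),
   real (Lim_seq (fun N => Im (gauss_seq z N)))).

Definition gammaF (alpha : C) (m : nat) (Q : R) (k : nat)
  (omega : nat -> R) (mu : nat -> C) (s : C) : C :=
  (alpha * Cpow s m * Cpow (s - 1) m * Crpow Q s *
   Cprod k (fun i => CGamma (RtoC (omega i) * s + mu i)))%C.

Definition J (Q : R) (k : nat) (omega : nat -> R) (t : R) (s : C) : C :=
  (s + RtoC (Rabs t / 2 * ln Q) +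
   RtoC (Rabs t / 2) * Csum k (fun i => RtoC (omega i) * CLog (RtoC (omega i) * s)))%C.

Definition entire (f : C -> C) : Prop :=
  forall z, ex_derive (K := C_AbsRing) (V := C_NormedModule) f z.

Definition finite_order (f : C -> C) : Prop :=
  exists A rho : R, 0 <= rho /\ forall z, Cmod (f z) <= A * exp (Rpower (1 + Cmod z) rho).

Definition in_Ssharp (F : C -> C) (alpha : C) (m : nat) (Q : R) (k : nat)
  (omega : nat -> R) (mu : nat -> C) : Prop :=
  (exists s, s <> 1%C /\ F s <> 0%C) /\
  (exists a : nat -> C, forall s, 1 < Re s ->
      ex_series (fun n => Cmod (a (S n) * Crpow (INR (S n)) (- s))%C) /\
      is_series (K := C_AbsRing) (V := C_NormedModule)
        (fun n => a (S n) * Crpow (INR (S n)) (- s))%C (F s)) /\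
  (* (ii)+(iii) m is the order of the pole at 1 and (s-1)^m F(s) extends to an
     entire function of finite order *)
  (exists G : C -> C, entire G /\ finite_order G /\
      (forall s, s <> 1%C -> G s = (Cpow (s - 1) m * F s)%C) /\
      (m = 0%nat \/ G 1%C <> 0%C)) /\
  alpha <> 0%C /\ 0 < Q /\ (1 <= k)%nat /\
  (forall i, (i < k)%nat -> 0 < omega i /\ 0 <= Re (mu i)) /\
  (exists Xi : C -> C, entire Xi /\
      (forall s, 1 < Re s -> Xi s = (gammaF alpha m Q k omega mu s * F s)%C) /\
      (forall s, Xi s = Cconj (Xi (1 - Cconj s)%C))).

Definition integrandI (alpha : C) (m : nat) (Q : R) (k : nat)
  (omega : nat -> R) (mu : nat -> C) (t : R) (s : C) (n : nat) (z : C) : C :=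
  (gammaF alpha m Q k omega mu z *
   Cexp (RtoC (/ Rabs t) * ((J Q k omega t s - z) * (J Q k omega t s - z))) *
   Crpow (INR n) (- z))%C.

(* Taking logarithms, ln |I(z)| is at most a sum of explicit terms:
   ln |alpha|, the polynomial factor 2 m |z|, the factor Re z ln Q, the Gamma
   factors, the Gaussian term (Re(J - z)^2 - Im(J - z)^2) / |t| and - Re z ln n.
   The only non-elementary ingredient is a uniform bound for Gamma away from its
   poles; with Gamma defined by Gauss's limit formula it follows from a bound on
   the logarithm of Gauss's product, uniform in the number of factors (obtained by
   comparing with ln N! shifted by the fractional part of Re w).  The shift
   J_t(s) - s is O(|t| log |s|) in real part and O(|t|) in imaginary part.

   Writing y = Im s = a^60, all exponents y^(1/4), y^(3/5), y^(2/3), y^(4/3)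
   become powers of a.  In case (i) the Gaussian contributes - a^80 / (4|t|) and
   every other term is O(a^72) or O(a^72 / |t|); in case (ii) it contributes
   - (y - Im z)^2 / |t| and the other terms are absorbed by one half of it.
   Both absorptions hold as soon as a exceeds an explicit height0 depending only
   on Cc and the gamma factor. *)
From Stdlib Require Import Reals Lra Lia Psatz Factorial ZArith.
From Coquelicot Require Import Coquelicot Complex.
Open Scope R_scope.

Lemma ln_le_sub1 x : 0 < x -> ln x <= x - 1.
Proof.
  intros Hx. pose proof (exp_ineq1_le (ln x)) as H. rewrite exp_ln in H; lra.
Qed.

Lemma ln_ge_1_sub_inv x : 0 < x -> 1 - / x <= ln x.
Proof.
  intros Hx. pose proof (ln_le_sub1 (/ x) (Rinv_0_lt_compat _ Hx)) as H.
  rewrite ln_Rinv in H by lra. lra.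
Qed.

Lemma ln_le_id x : 0 < x -> ln x <= x.
Proof. intros Hx. pose proof (ln_le_sub1 x Hx). lra. Qed.

(* Stdlib's [ln] is total, with the junk value [ln 0 = 0]. *)
Lemma ln_zero : ln 0 = 0.
Proof.
  unfold ln. destruct (Rlt_dec 0 0) as [h|h]; [exfalso; exact (Rlt_irrefl 0 h)|reflexivity].
Qed.

Lemma ln_nat_nonneg N : (1 <= N)%nat -> 0 <= ln (INR N).
Proof. intros HN. rewrite <- ln_1. apply ln_le; [lra|]. apply (le_INR 1); auto. Qed.

Lemma ln_nat_le N : ln (INR N) <= INR N.
Proof.
  destruct N as [|N]; [simpl; rewrite ln_zero; lra|].
  apply ln_le_id, lt_0_INR; lia.
Qed.

(* Monotonicity of [ln] on naturals, valid even at the junk value [ln 0]. *)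
Lemma ln_nat_le_ln N x : INR N <= x -> 1 <= x -> ln (INR N) <= ln x.
Proof.
  intros HN Hx. destruct N as [|N].
  - change (INR 0) with 0. rewrite ln_zero, <- ln_1. apply ln_le; lra.
  - apply ln_le; auto. apply lt_0_INR; lia.
Qed.

Lemma ln2_le_1 : ln 2 <= 1.
Proof. pose proof (ln_le_sub1 2 ltac:(lra)). lra. Qed.

Lemma exp_le_exp x y : x <= y -> exp x <= exp y.
Proof. intros [H|H]; [left; apply exp_increasing; auto|subst; lra]. Qed.

Lemma mul_le_exp a b x y :
  0 <= a -> a <= exp x -> 0 <= b -> b <= exp y -> a * b <= exp (x + y).
Proof. intros. rewrite exp_plus. apply Rmult_le_compat; auto. Qed.

Lemma pow_le_exp r m : 0 <= r -> r ^ m <= exp (INR m * (r - 1)).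
Proof.
  intros Hr. induction m as [|m IH]; [simpl; rewrite Rmult_0_l, exp_0; lra|].
  rewrite S_INR. replace ((INR m + 1) * (r - 1)) with ((r - 1) + INR m * (r - 1)) by ring.
  simpl. apply mul_le_exp; auto; [pose proof (exp_ineq1_le (r - 1)); lra|apply pow_le; auto].
Qed.

Lemma pow_ge_self a N : 1 <= a -> (1 <= N)%nat -> a <= a ^ N.
Proof. intros Ha HN. pose proof (Rle_pow a 1 N Ha HN). simpl in *. lra. Qed.

Lemma Rabs_le_shift q p : Rabs p <= Rabs q + Rabs (q - p).
Proof.
  replace p with (q - (q - p)) at 1 by ring. unfold Rminus at 1.
  eapply Rle_trans; [apply Rabs_triang|]. rewrite Rabs_Ropp. lra.
Qed.

Lemma Rabs_sub_triang x y z : Rabs (x - z) <= Rabs (x - y) + Rabs (y - z).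
Proof. replace (x - z) with ((x - y) + (y - z)) by ring. apply Rabs_triang. Qed.

Fixpoint Rsum (k : nat) (f : nat -> R) : R :=
  match k with O => 0 | S k' => Rsum k' f + f k' end.

Lemma Rsum_le k f g : (forall i, (i < k)%nat -> f i <= g i) -> Rsum k f <= Rsum k g.
Proof.
  induction k as [|k IH]; simpl; intros H; [lra|].
  pose proof (H k ltac:(lia)). assert (Rsum k f <= Rsum k g) by (apply IH; intros; apply H; lia).
  lra.
Qed.

Lemma Rsum_ext k f g : (forall i, (i < k)%nat -> f i = g i) -> Rsum k f = Rsum k g.
Proof. intros H. apply Rle_antisym; apply Rsum_le; intros i Hi; rewrite H; auto; lra. Qed.

Lemma Rsum_plus k f g : Rsum k (fun i => f i + g i) = Rsum k f + Rsum k g.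
Proof. induction k as [|k IH]; simpl; [lra|]. rewrite IH; ring. Qed.

Lemma Rsum_scal k c f : Rsum k (fun i => c * f i) = c * Rsum k f.
Proof. induction k as [|k IH]; simpl; [lra|]. rewrite IH; ring. Qed.

Lemma Rsum_const k c : Rsum k (fun _ => c) = INR k * c.
Proof. induction k as [|k IH]; simpl Rsum; [simpl; lra|]. rewrite IH, S_INR; ring. Qed.

Lemma Rsum_nonneg k f : (forall i, (i < k)%nat -> 0 <= f i) -> 0 <= Rsum k f.
Proof. intros H. pose proof (Rsum_le k (fun _ => 0) f H). rewrite Rsum_const in *. lra. Qed.

Lemma Rsum_term_le k f i :
  (forall i, (i < k)%nat -> 0 <= f i) -> (i < k)%nat -> f i <= Rsum k f.
Proof.
  induction k as [|k IH]; intros Hf Hi; [lia|]. simpl.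
  destruct (Nat.eq_dec i k) as [->|Hik].
  - pose proof (Rsum_nonneg k f ltac:(intros; apply Hf; lia)). lra.
  - pose proof (IH ltac:(intros; apply Hf; lia) ltac:(lia)). pose proof (Hf k ltac:(lia)). lra.
Qed.

Lemma Rsum_split a b f : Rsum (a + b) f = Rsum a f + Rsum b (fun i => f (a + i)%nat).
Proof.
  induction b as [|b IH]; simpl; [rewrite Nat.add_0_r; ring|].
  rewrite Nat.add_succ_r; simpl. rewrite IH; ring.
Qed.

Lemma Rsum_abs k f : Rabs (Rsum k f) <= Rsum k (fun i => Rabs (f i)).
Proof.
  induction k as [|k IH]; simpl; [rewrite Rabs_R0; lra|].
  pose proof (Rabs_triang (Rsum k f) (f k)). lra.
Qed.

Lemma Re_Csum k f : Re (Csum k f) = Rsum k (fun i => Re (f i)).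
Proof. induction k as [|k IH]; simpl; [reflexivity|]. rewrite <- IH. reflexivity. Qed.

Lemma Im_Csum k f : Im (Csum k f) = Rsum k (fun i => Im (f i)).
Proof. induction k as [|k IH]; simpl; [reflexivity|]. rewrite <- IH. reflexivity. Qed.

Lemma Cprod_le_exp k f g : (forall i, (i < k)%nat -> Cmod (f i) <= exp (g i)) ->
  Cmod (Cprod k f) <= exp (Rsum k g).
Proof.
  induction k as [|k IH]; simpl; intros H; [rewrite Cmod_1, exp_0; lra|].
  rewrite Cmod_mult, exp_plus. apply Rmult_le_compat; try apply Cmod_ge_0.
  - apply IH; intros; apply H; lia.
  - apply H; lia.
Qed.

Lemma Cprod_ge_exp k f g : (forall i, (i < k)%nat -> exp (g i) <= Cmod (f i)) ->
  exp (Rsum k g) <= Cmod (Cprod k f).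
Proof.
  induction k as [|k IH]; simpl; intros H; [rewrite Cmod_1, exp_0; lra|].
  rewrite Cmod_mult, exp_plus. apply Rmult_le_compat; try (left; apply exp_pos).
  - apply IH; intros; apply H; lia.
  - apply H; lia.
Qed.

Lemma Cmod_Cexp z : Cmod (Cexp z) = exp (Re z).
Proof.
  unfold Cexp, Cmod; simpl.
  match goal with |- sqrt ?a = _ => replace a with (exp (Re z) * exp (Re z))
    by (pose proof (sin2_cos2 (Im z)); unfold Rsqr in *; nra) end.
  rewrite sqrt_square; auto. left; apply exp_pos.
Qed.

Lemma Cmod_Crpow a z : Cmod (Crpow a z) = exp (Re z * ln a).
Proof. unfold Crpow. rewrite Cmod_Cexp. unfold Re; simpl. f_equal; ring. Qed.

Lemma im_le_Cmod c : Rabs (Im c) <= Cmod c.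
Proof.
  pose proof (Cmod2_alt c). pose proof (Cmod_ge_0 c).
  rewrite <- (Rabs_pos_eq (Cmod c)) by lra.
  apply (Rsqr_le_abs_0 (Im c) (Cmod c)). unfold Rsqr. nra.
Qed.

Lemma Cmod_le_sum c : Cmod c <= Rabs (Re c) + Rabs (Im c).
Proof.
  pose proof (Cmod2_alt c). pose proof (Cmod_ge_0 c).
  pose proof (Rabs_pos (Re c)). pose proof (Rabs_pos (Im c)).
  rewrite <- (Rabs_pos_eq (Cmod c)) by lra.
  rewrite <- (Rabs_pos_eq (Rabs (Re c) + Rabs (Im c))) by lra.
  apply Rsqr_le_abs_0. unfold Rsqr.
  rewrite <- (pow2_abs (Re c)), <- (pow2_abs (Im c)) in *.
  assert (0 <= Rabs (Re c) * Rabs (Im c)) by (apply Rmult_le_pos; auto). nra.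
Qed.

Lemma Cmod_scal (a : R) v : 0 < a -> Cmod (RtoC a * v) = a * Cmod v.
Proof. intros. rewrite Cmod_mult, Cmod_R, Rabs_pos_eq; lra. Qed.

Lemma Cpow_pair_bound z m : Cmod (Cpow z m) * Cmod (Cpow (z - 1) m) <= exp (2 * INR m * Cmod z).
Proof.
  rewrite !Cmod_pow.
  replace (2 * INR m * Cmod z) with (INR m * (Cmod z + 1 - 1) + INR m * (Cmod z + 1 - 1)) by ring.
  assert (Hz1 : Cmod (z - 1) <= Cmod z + 1).
  { unfold Cminus. pose proof (Cmod_triangle z (- (1))) as H. rewrite Cmod_opp, Cmod_1 in H. exact H. }
  pose proof (Cmod_ge_0 z). pose proof (Cmod_ge_0 (z - 1)).
  apply mul_le_exp; try (apply pow_le, Cmod_ge_0);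
    (eapply Rle_trans; [|apply pow_le_exp; lra]); apply pow_incr; lra.
Qed.

(** * A uniform bound for Gauss's product, hence for Gamma *)

Definition lnfact (N : nat) : R := Rsum N (fun i => ln (INR (S i))).

Lemma ln_fact N : ln (INR (fact N)) = lnfact N.
Proof.
  unfold lnfact. induction N as [|N IH]; [simpl; apply ln_1|]. cbn [Rsum].
  rewrite <- IH. change (fact (S N)) with (S N * fact N)%nat.
  rewrite mult_INR, ln_mult; [ring|apply lt_0_INR; lia|apply lt_0_INR, lt_O_fact].
Qed.

Lemma lnfact_bounds N : 0 <= lnfact N <= INR N * ln (INR N).
Proof.
  unfold lnfact. split.
  - apply Rsum_nonneg. intros i _. apply ln_nat_nonneg. lia.
  - rewrite <- Rsum_const. apply Rsum_le. intros i Hi.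
    apply ln_le; [apply lt_0_INR; lia|apply le_INR; lia].
Qed.

(* Shifting the factorial by a fraction [b]: concavity of [ln] on each [i+1, i+2]. *)
Lemma ln_shift_step (b M : R) : 0 <= b <= 1 -> 0 <= M ->
  b * (ln (M + 3) - ln (M + 2)) <= ln (M + 1 + b) - ln (M + 1).
Proof.
  intros Hb HM.
  assert (Hup : ln (M + 3) - ln (M + 2) <= / (M + 2)).
  { rewrite <- ln_div by lra.
    pose proof (ln_le_sub1 ((M + 3) / (M + 2)) ltac:(apply Rdiv_lt_0_compat; lra)) as H.
    replace ((M + 3) / (M + 2) - 1) with (/ (M + 2)) in H by (field; lra). exact H. }
  assert (Hlow : b / (M + 1 + b) <= ln (M + 1 + b) - ln (M + 1)).
  { rewrite <- ln_div by lra.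
    pose proof (ln_ge_1_sub_inv ((M + 1 + b) / (M + 1)) ltac:(apply Rdiv_lt_0_compat; lra)) as H.
    replace (1 - / ((M + 1 + b) / (M + 1))) with (b / (M + 1 + b)) in H by (field; lra). exact H. }
  assert (b * / (M + 2) <= b / (M + 1 + b)).
  { unfold Rdiv. apply Rmult_le_compat_l; [lra|]. apply Rinv_le_contravar; lra. }
  assert (0 <= ln (M + 3) - ln (M + 2)) by (pose proof (ln_le (M + 2) (M + 3)); lra).
  nra.
Qed.

Lemma lnfact_shift (b : R) (M : nat) : 0 <= b <= 1 ->
  lnfact M + b * (ln (INR M + 2) - ln 2) <= Rsum M (fun i => ln (INR (S i) + b)).
Proof.
  intros Hb. unfold lnfact. induction M as [|M IH].
  - simpl. replace (0 + 2) with 2 by ring. lra.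
  - cbn [Rsum]. rewrite S_INR.
    pose proof (ln_shift_step b (INR M) Hb (pos_INR M)).
    replace (INR M + 1 + 2) with (INR M + 3) by ring. lra.
Qed.

(* The exponent of the Gamma bound for [Re w = sigma] when [w] stays at
   distance [>= c] from the poles [0, -1, -2, ...]. *)
Definition gamma_exponent (sigma c : R) : R :=
  3 * (Rabs sigma + 2) ^ 2 + (Rabs sigma + 2) * Rabs (ln c).

(* [ln] of the Gauss product with the denominators replaced by the lower bounds
   [max (c, sigma + j)] of their moduli. *)
Definition gauss_log (sigma c : R) (N : nat) : R :=
  sigma * ln (INR N) + lnfact N - Rsum (S N) (fun j => ln (Rmax c (sigma + INR j))).

Lemma ln_Rmax_l c x : 0 < c -> ln c <= ln (Rmax c x).
Proof. intros. apply ln_le; auto. apply Rmax_l. Qed.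

Lemma ln_Rmax_r c x : 0 < x -> ln x <= ln (Rmax c x).
Proof. intros. apply ln_le; auto. apply Rmax_r. Qed.

Lemma gauss_denominators_ge c sigma P : 0 < c ->
  INR P * ln c <= Rsum P (fun j => ln (Rmax c (sigma + INR j))).
Proof.
  intros Hc. rewrite <- Rsum_const. apply Rsum_le. intros. apply ln_Rmax_l; auto.
Qed.

(* Few factors ([N <= |sigma| + 1]): crude termwise estimates suffice. *)
Lemma gauss_log_few sigma c N : 0 < c <= 1 -> INR N <= Rabs sigma + 1 ->
  gauss_log sigma c N <= gamma_exponent sigma c.
Proof.
  intros Hc HN. unfold gauss_log, gamma_exponent.
  assert (Hlc : ln c <= 0) by (rewrite <- ln_1; apply ln_le; lra).
  rewrite (Rabs_left1 (ln c)) by lra.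
  pose proof (gauss_denominators_ge c sigma (S N) ltac:(lra)) as Hden. rewrite S_INR in Hden.
  pose proof (lnfact_bounds N). pose proof (ln_nat_le N). pose proof (pos_INR N).
  assert (HlnN : 0 <= ln (INR N)).
  { destruct N; [simpl; rewrite ln_zero; lra|apply ln_nat_nonneg; lia]. }
  assert (sigma * ln (INR N) <= Rabs sigma * INR N).
  { pose proof (Rle_abs sigma). pose proof (Rabs_pos sigma). nra. }
  assert (INR N * ln (INR N) <= INR N * INR N) by nra.
  pose proof (Rabs_pos sigma). nra.
Qed.

(* Many factors, [sigma = b - P] with [P] a natural number and [0 <= b < 1]:
   the factors [j > P] pair off with the factorial shifted by [b]. *)
Lemma gauss_log_left sigma c b (P M : nat) : 0 < c <= 1 -> 0 <= b < 1 ->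
  sigma = b - INR P -> gauss_log sigma c (M + P) <= gamma_exponent sigma c.
Proof.
  intros Hc Hb Hs. unfold gauss_log, gamma_exponent.
  assert (Hlc : ln c <= 0) by (rewrite <- ln_1; apply ln_le; lra).
  rewrite (Rabs_left1 (ln c)) by lra.
  pose proof (pos_INR M) as HM. pose proof (pos_INR P) as HP.
  assert (HPs : INR P <= Rabs sigma + 1) by (pose proof (Rle_abs (- sigma)); rewrite Rabs_Ropp in *; lra).
  replace (S (M + P)) with (S P + M)%nat by lia. rewrite Rsum_split.
  pose proof (gauss_denominators_ge c sigma (S P) ltac:(lra)) as Hden. rewrite S_INR in Hden.
  assert (Htail : Rsum M (fun i => ln (INR (S i) + b)) <=
                  Rsum M (fun i => ln (Rmax c (sigma + INR (S P + i))))).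
  { apply Rsum_le. intros i Hi.
    replace (INR (S i) + b) with (sigma + INR (S P + i)) by (rewrite Hs, plus_INR, !S_INR; ring).
    apply ln_Rmax_r. rewrite Hs, plus_INR, !S_INR. pose proof (pos_INR i). lra. }
  pose proof (lnfact_shift b M ltac:(lra)) as Hshift.
  assert (Hfact : lnfact (M + P) <= lnfact M + INR P * ln (INR (M + P))).
  { unfold lnfact. rewrite Rsum_split, <- Rsum_const. apply Rplus_le_compat_l, Rsum_le.
    intros i Hi. apply ln_le; [apply lt_0_INR; lia|apply le_INR; lia]. }
  assert (HlnN : ln (INR (M + P)) <= ln (INR M + 2) + INR P).
  { destruct (Nat.eq_dec (M + P) 0) as [E|E].
    { rewrite E. change (INR 0) with 0. rewrite ln_zero, <- ln_1. pose proof (ln_le 1 (INR M + 2)). lra. }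
    apply Rle_trans with (ln ((INR P + 1) * (INR M + 2))).
    - apply ln_le; [apply lt_0_INR; lia|rewrite plus_INR; nra].
    - rewrite ln_mult by lra. pose proof (ln_le_sub1 (INR P + 1) ltac:(lra)). lra. }
  assert (Hgrow : 0 <= ln (INR M + 2) - ln 2) by (pose proof (ln_le 2 (INR M + 2)); lra).
  assert (b * (ln (INR (M + P)) - ln (INR M + 2)) <= INR P).
  { assert (0 <= b * (INR P - (ln (INR (M + P)) - ln (INR M + 2)))) by (apply Rmult_le_pos; lra).
    assert (0 <= (1 - b) * INR P) by (apply Rmult_le_pos; lra). lra. }
  assert (b * ln 2 <= 1) by (pose proof ln2_le_1; pose proof ln_lt_2; nra).
  assert (0 <= (Rabs sigma + 1 - INR P) * (- ln c)) by (apply Rmult_le_pos; lra).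
  pose proof (Rabs_pos sigma). subst sigma. nra.
Qed.

(* Many factors, [sigma = b + E + 1] with [E] a natural number and [0 <= b < 1]:
   all denominators pair off with the factorial shifted by [b], up to [E] extra ones. *)
Lemma gauss_log_right sigma c b (E N : nat) : 0 < c <= 1 -> 0 <= b < 1 ->
  sigma = b + INR E + 1 -> gauss_log sigma c N <= gamma_exponent sigma c.
Proof.
  intros Hc Hb Hs. unfold gauss_log, gamma_exponent.
  assert (Hlc : ln c <= 0) by (rewrite <- ln_1; apply ln_le; lra).
  pose proof (pos_INR E) as HE. pose proof (pos_INR N) as HN.
  set (h := fun i => ln (INR (S i) + b)).
  assert (Hden : Rsum (S N) (fun j => h (E + j)%nat) <=
                 Rsum (S N) (fun j => ln (Rmax c (sigma + INR j)))).
  { apply Rsum_le. intros j Hj. unfold h.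
    replace (INR (S (E + j)) + b) with (sigma + INR j) by (rewrite Hs, S_INR, plus_INR; ring).
    apply ln_Rmax_r. pose proof (pos_INR j). lra. }
  pose proof (Rsum_split E (S N) h) as Hsplit.
  pose proof (lnfact_shift b (E + S N) ltac:(lra)) as Hshift. fold h in Hshift.
  assert (Hhead : Rsum E h <= INR E * INR E).
  { rewrite <- Rsum_const. apply Rsum_le. intros i Hi. unfold h.
    eapply Rle_trans; [apply ln_le_sub1; rewrite S_INR; pose proof (pos_INR i); lra|].
    assert (INR (S i) <= INR E) by (apply le_INR; lia). lra. }
  assert (Hfact : lnfact N + INR (S E) * ln (INR N) <= lnfact (E + S N)).
  { unfold lnfact. replace (E + S N)%nat with (N + S E)%nat by lia.
    rewrite Rsum_split, <- Rsum_const. apply Rplus_le_compat_l, Rsum_le.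
    intros i Hi. apply ln_nat_le_ln; [apply le_INR; lia|apply (le_INR 1); lia]. }
  assert (HlnN : ln (INR N) <= ln (INR (E + S N) + 2)).
  { apply ln_nat_le_ln; rewrite plus_INR, S_INR; lra. }
  assert (b * ln 2 <= 1) by (pose proof ln2_le_1; pose proof ln_lt_2; nra).
  assert (0 <= b * (ln (INR (E + S N) + 2) - ln (INR N))) by (apply Rmult_le_pos; lra).
  assert (INR E * INR E <= Rabs sigma ^ 2).
  { rewrite Rabs_pos_eq by lra. nra. }
  assert (0 <= (Rabs sigma + 2) * Rabs (ln c))
    by (apply Rmult_le_pos; [pose proof (Rabs_pos sigma)|apply Rabs_pos]; lra).
  rewrite S_INR in Hfact. pose proof (Rabs_pos sigma). subst sigma. nra.
Qed.

Lemma gauss_log_bound sigma c N : 0 < c <= 1 -> gauss_log sigma c N <= gamma_exponent sigma c.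
Proof.
  intros Hc.
  destruct (Rle_dec (INR N) (Rabs sigma + 1)) as [Hfew|Hmany]; [apply gauss_log_few; auto|].
  destruct (archimed sigma) as [Hup1 Hup2].
  set (z := (up sigma - 1)%Z). set (b := sigma - IZR z).
  assert (Hb : 0 <= b < 1) by (unfold b, z; rewrite minus_IZR; simpl; lra).
  destruct (Z_le_gt_dec z 0) as [Hz|Hz].
  - set (P := Z.to_nat (- z)).
    assert (HP : INR P = - IZR z) by (unfold P; rewrite INR_IZR_INZ, Z2Nat.id, opp_IZR by lia; reflexivity).
    assert (HPN : (P < N)%nat).
    { apply INR_lt. pose proof (Rle_abs (- sigma)). rewrite Rabs_Ropp in *. unfold b in Hb. lra. }
    replace N with (N - P + P)%nat by lia.
    apply (gauss_log_left sigma c b); auto. unfold b. lra.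
  - set (E := Z.to_nat (z - 1)).
    assert (HE : INR E = IZR z - 1)
      by (unfold E; rewrite INR_IZR_INZ, Z2Nat.id, minus_IZR by lia; reflexivity).
    apply (gauss_log_right sigma c b E); auto. unfold b. lra.
Qed.

Lemma gauss_seq_bound w c N : 0 < c <= 1 -> (forall j, c <= Cmod (w + RtoC (INR j))) ->
  Cmod (gauss_seq w N) <= exp (gamma_exponent (Re w) c).
Proof.
  intros Hc Hw.
  set (g := fun j => ln (Rmax c (Re w + INR j))).
  assert (Hden : exp (Rsum (S N) g) <= Cmod (Cprod (S N) (fun j => (w + RtoC (INR j))%C))).
  { apply Cprod_ge_exp. intros j _. unfold g.
    rewrite exp_ln by (pose proof (Rmax_l c (Re w + INR j)); lra).
    apply Rmax_lub; [apply Hw|].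
    replace (Re w + INR j) with (Re (w + RtoC (INR j))) by (unfold Re; simpl; ring).
    eapply Rle_trans; [apply Rle_abs|apply re_le_Cmod]. }
  assert (Hpos : 0 < exp (Rsum (S N) g)) by apply exp_pos.
  assert (Hne : Cprod (S N) (fun j => (w + RtoC (INR j))%C) <> 0%C).
  { intros H0. rewrite H0, Cmod_0 in Hden. lra. }
  unfold gauss_seq. rewrite Cmod_div, Cmod_mult, Cmod_Crpow, Cmod_R by exact Hne.
  rewrite Rabs_pos_eq by apply pos_INR.
  rewrite <- (exp_ln (INR (fact N))) by apply lt_0_INR, lt_O_fact.
  rewrite ln_fact, <- exp_plus.
  apply Rle_trans with (exp (Re w * ln (INR N) + lnfact N) / exp (Rsum (S N) g)).
  { unfold Rdiv. apply Rmult_le_compat_l; [left; apply exp_pos|]. apply Rinv_le_contravar; auto. }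
  unfold Rdiv. rewrite <- exp_Ropp, <- exp_plus. apply exp_le_exp.
  pose proof (gauss_log_bound (Re w) c N Hc). unfold gauss_log in *. unfold g. lra.
Qed.

Lemma real_Lim_seq_bound (u : nat -> R) B : (forall n, Rabs (u n) <= B) -> Rabs (real (Lim_seq u)) <= B.
Proof.
  intros H.
  assert (Hup : Rbar_le (Lim_seq u) (Lim_seq (fun _ => B))).
  { apply Lim_seq_le_loc. exists 0%nat. intros n _. pose proof (H n). pose proof (Rle_abs (u n)). lra. }
  assert (Hlow : Rbar_le (Lim_seq (fun _ => - B)) (Lim_seq u)).
  { apply Lim_seq_le_loc. exists 0%nat. intros n _. pose proof (H n).
    pose proof (Rle_abs (- u n)). rewrite Rabs_Ropp in *. lra. }
  rewrite Lim_seq_const in Hup, Hlow.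
  destruct (Lim_seq u) as [r| |]; simpl in *; try contradiction.
  apply Rabs_le; lra.
Qed.

Lemma CGamma_bound w c : 0 < c <= 1 -> (forall j, c <= Cmod (w + RtoC (INR j))) ->
  Cmod (CGamma w) <= exp (gamma_exponent (Re w) c + 1).
Proof.
  intros Hc Hw. set (B := exp (gamma_exponent (Re w) c)).
  assert (HB : forall N, Cmod (gauss_seq w N) <= B) by (intros; apply gauss_seq_bound; auto).
  assert (Hre : Rabs (real (Lim_seq (fun N => Re (gauss_seq w N)))) <= B).
  { apply real_Lim_seq_bound. intros N. eapply Rle_trans; [apply re_le_Cmod|apply HB]. }
  assert (Him : Rabs (real (Lim_seq (fun N => Im (gauss_seq w N)))) <= B).
  { apply real_Lim_seq_bound. intros N. eapply Rle_trans; [apply im_le_Cmod|apply HB]. }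
  unfold CGamma. eapply Rle_trans; [apply Cmod_2Rmax|]. cbn [fst snd].
  rewrite exp_plus. fold B.
  assert (Hsqrt2 : sqrt 2 <= exp 1).
  { rewrite <- (sqrt_square (exp 1)) by (left; apply exp_pos). apply sqrt_le_1_alt.
    pose proof (exp_ineq1_le 1). nra. }
  rewrite Rmult_comm. apply Rmult_le_compat; [|apply sqrt_pos| |exact Hsqrt2].
  - eapply Rle_trans; [apply Rabs_pos|apply Rmax_l].
  - apply Rmax_lub; auto.
Qed.

(* Above the real axis ([Im w >= 1]) the poles are at distance [>= 1]. *)
Lemma CGamma_bound_upper w : 1 <= Im w -> Cmod (CGamma w) <= exp (3 * (Rabs (Re w) + 2) ^ 2 + 1).
Proof.
  intros Hw. replace (3 * (Rabs (Re w) + 2) ^ 2) with (gamma_exponent (Re w) 1)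
    by (unfold gamma_exponent; rewrite ln_1, Rabs_R0; ring).
  apply CGamma_bound; [lra|]. intros j.
  eapply Rle_trans; [|apply im_le_Cmod].
  replace (Im (w + RtoC (INR j))) with (Im w) by (unfold Im; simpl; ring).
  rewrite Rabs_pos_eq; lra.
Qed.

(* In the right half-plane the poles are at distance [>= min 1 (Re w)]. *)
Lemma CGamma_bound_right w : 0 < Re w ->
  Cmod (CGamma w) <= exp (gamma_exponent (Re w) (Rmin 1 (Re w)) + 1).
Proof.
  intros Hw. apply CGamma_bound; [split; [apply Rmin_pos; lra|apply Rmin_l]|]. intros j.
  eapply Rle_trans; [|apply re_le_Cmod]. eapply Rle_trans; [|apply Rle_abs].
  replace (Re (w + RtoC (INR j))) with (Re w + INR j) by (unfold Re; simpl; ring).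
  pose proof (pos_INR j). pose proof (Rmin_r 1 (Re w)). lra.
Qed.

(** * The shift [J_t(s) - s] *)

Lemma Re_J Q k om t s : Re (J Q k om t s) = Re s + Rabs t / 2 * ln Q +
  Rabs t / 2 * Rsum k (fun i => om i * ln (Cmod (RtoC (om i) * s))).
Proof.
  unfold J. simpl.
  pose proof (Re_Csum k (fun i => (RtoC (om i) * CLog (RtoC (om i) * s))%C)) as HR.
  cbv [Re] in HR. rewrite HR.
  rewrite (Rsum_ext k _ (fun i => om i * ln (Cmod (RtoC (om i) * s)))).
  - unfold Re; ring.
  - intros. unfold CLog, Re; simpl. ring.
Qed.

Lemma Im_J Q k om t s : Im (J Q k om t s) = Im s +
  Rabs t / 2 * Rsum k (fun i => om i * Carg (RtoC (om i) * s)).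
Proof.
  unfold J. simpl.
  pose proof (Im_Csum k (fun i => (RtoC (om i) * CLog (RtoC (om i) * s))%C)) as HI.
  pose proof (Re_Csum k (fun i => (RtoC (om i) * CLog (RtoC (om i) * s))%C)) as HR.
  cbv [Re Im] in HI, HR. rewrite HI, HR.
  rewrite (Rsum_ext k _ (fun i => om i * Carg (RtoC (om i) * s))).
  - unfold Im, Re; simpl. ring.
  - intros. unfold CLog, Im; simpl. ring.
Qed.

Lemma Carg_upper v : 0 <= Im v -> 0 <= Carg v <= PI.
Proof. intros. unfold Carg. destruct (Rle_dec 0 (Im v)); [apply acos_bound|contradiction]. Qed.

Lemma Re_J_shift_bound Q k om t s :
  (forall i, (i < k)%nat -> 0 < om i) -> 1 <= Cmod s ->
  Rabs (Re (J Q k om t s) - Re s) <=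
  Rabs t / 2 * (Rabs (ln Q) + Rsum k (fun i => om i * Rabs (ln (om i))) + Rsum k om * ln (Cmod s)).
Proof.
  intros Hom Hs. rewrite Re_J.
  assert (Hl : 0 <= ln (Cmod s)) by (rewrite <- ln_1; apply ln_le; lra).
  replace (Re s + Rabs t / 2 * ln Q
           + Rabs t / 2 * Rsum k (fun i => om i * ln (Cmod (RtoC (om i) * s))) - Re s)
    with (Rabs t / 2 * (ln Q + Rsum k (fun i => om i * ln (Cmod (RtoC (om i) * s))))) by ring.
  pose proof (Rabs_pos t).
  rewrite Rabs_mult, (Rabs_pos_eq (Rabs t / 2)) by lra.
  apply Rmult_le_compat_l; [lra|].
  eapply Rle_trans; [apply Rabs_triang|]. rewrite Rplus_assoc. apply Rplus_le_compat_l.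
  eapply Rle_trans; [apply Rsum_abs|].
  rewrite Rmult_comm, <- Rsum_scal, <- Rsum_plus. apply Rsum_le. intros i Hi.
  pose proof (Hom i Hi).
  rewrite Cmod_scal, ln_mult, Rabs_mult, Rabs_pos_eq by lra.
  pose proof (Rabs_triang (ln (om i)) (ln (Cmod s))). rewrite (Rabs_pos_eq (ln (Cmod s))) in * by lra.
  nra.
Qed.

(* In the upper half-plane [Im J_t(s) - Im s] is bounded: the arguments lie in [0, pi]. *)
Lemma Im_J_shift_bound Q k om t s :
  (forall i, (i < k)%nat -> 0 < om i) -> 0 <= Im s ->
  Rabs (Im (J Q k om t s) - Im s) <= Rabs t / 2 * Rsum k om * PI.
Proof.
  intros Hom Hs. rewrite Im_J.
  replace (Im s + Rabs t / 2 * Rsum k (fun i => om i * Carg (RtoC (om i) * s)) - Im s)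
    with (Rabs t / 2 * Rsum k (fun i => om i * Carg (RtoC (om i) * s))) by ring.
  pose proof (Rabs_pos t).
  rewrite Rabs_mult, (Rabs_pos_eq (Rabs t / 2)), Rmult_assoc by lra.
  apply Rmult_le_compat_l; [lra|].
  eapply Rle_trans; [apply Rsum_abs|]. rewrite Rmult_comm, <- Rsum_scal. apply Rsum_le. intros i Hi.
  pose proof (Hom i Hi).
  assert (0 <= Im (RtoC (om i) * s)).
  { replace (Im (RtoC (om i) * s)) with (om i * Im s) by (unfold Im; simpl; ring). nra. }
  pose proof (Carg_upper _ H1). rewrite Rabs_mult, !Rabs_pos_eq by lra. nra.
Qed.

(** * The modulus of the integrand *)

Lemma integrand_log_bound (alpha : C) (m : nat) (Q : R) (k : nat) (om : nat -> R)
  (mu : nat -> C) (t : R) (s : C) (n : nat) (z : C) (Gsum : R) :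
  alpha <> 0%C -> t <> 0 ->
  Cmod (Cprod k (fun i => CGamma (RtoC (om i) * z + mu i))) <= exp Gsum ->
  Cmod (integrandI alpha m Q k om mu t s n z) <=
  exp (ln (Cmod alpha) + 2 * INR m * Cmod z + Re z * ln Q + Gsum
      + ((Re (J Q k om t s) - Re z) ^ 2 - (Im (J Q k om t s) - Im z) ^ 2) / Rabs t
      - Re z * ln (INR n)).
Proof.
  intros Ha Ht HG.
  unfold integrandI, gammaF. rewrite !Cmod_mult, Cmod_Cexp, !Cmod_Crpow.
  assert (Hquad : Re (RtoC (/ Rabs t) * ((J Q k om t s - z) * (J Q k om t s - z))) =
     ((Re (J Q k om t s) - Re z) ^ 2 - (Im (J Q k om t s) - Im z) ^ 2) / Rabs t).
  { unfold Re, Im; simpl. field. apply Rabs_no_R0; auto. }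
  assert (Hα : Cmod alpha = exp (ln (Cmod alpha)))
    by (rewrite exp_ln; [reflexivity|apply Cmod_gt_0; exact Ha]).
  assert (Hn : Re (- z) * ln (INR n) = - (Re z * ln (INR n))) by (unfold Re; simpl; ring).
  rewrite Hquad, Hn. rewrite Hα at 1.
  set (E := ((Re (J Q k om t s) - Re z) ^ 2 - (Im (J Q k om t s) - Im z) ^ 2) / Rabs t).
  replace (ln (Cmod alpha) + 2 * INR m * Cmod z + Re z * ln Q + Gsum + E - Re z * ln (INR n))
    with ((((ln (Cmod alpha) + 2 * INR m * Cmod z) + Re z * ln Q) + Gsum) + E + - (Re z * ln (INR n)))
    by ring.
  rewrite (Rmult_assoc (exp (ln (Cmod alpha))) (Cmod (Cpow z m))).
  pose proof (Cmod_ge_0 (Cpow z m)). pose proof (Cmod_ge_0 (Cpow (z - 1) m)).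
  pose proof (Cmod_ge_0 (Cprod k (fun i => CGamma (RtoC (om i) * z + mu i)))).
  assert (Hexp : forall x, 0 <= exp x) by (intros; left; apply exp_pos).
  apply mul_le_exp; [repeat apply Rmult_le_pos; auto| |auto|apply Rle_refl].
  apply mul_le_exp; [repeat apply Rmult_le_pos; auto| |auto|apply Rle_refl].
  apply mul_le_exp; [repeat apply Rmult_le_pos; auto| |auto|exact HG].
  apply mul_le_exp; [repeat apply Rmult_le_pos; auto| |auto|apply Rle_refl].
  apply mul_le_exp; [auto|apply Rle_refl|apply Rmult_le_pos; auto|apply Cpow_pair_bound].
Qed.

(** * Quadratic estimates for the Gaussian factor *)

Lemma sq_le_twice u v x : Rabs x <= u + v -> 0 <= u -> 0 <= v -> x ^ 2 <= 2 * u ^ 2 + 2 * v ^ 2.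
Proof.
  intros. rewrite <- (pow2_abs x). pose proof (Rabs_pos x).
  assert (Rabs x ^ 2 <= (u + v) ^ 2) by (apply pow_incr; auto).
  pose proof (pow2_ge_0 (u - v)). nra.
Qed.

Lemma sq_ge_gap b c x : b - c <= Rabs x -> 0 <= b -> 0 <= c -> b ^ 2 - 2 * b * c <= x ^ 2.
Proof.
  intros. rewrite <- (pow2_abs x). pose proof (Rabs_pos x).
  destruct (Rle_dec (b - c) 0).
  - assert (0 <= b * (2 * c - b)) by (apply Rmult_le_pos; lra). pose proof (pow2_ge_0 (Rabs x)). nra.
  - assert ((b - c) ^ 2 <= Rabs x ^ 2) by (apply pow_incr; lra). pose proof (pow2_ge_0 c). nra.
Qed.

(* The real part of [(J - z)^2 / t]: if [Re (J - z)] is at most [X] up to an error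
   [t V / 2] and [|Im (J - z)|] at least [Y] up to [t P / 2], then the Gaussian
   decays like [exp ((2 X^2 - Y^2) / t)] up to the displayed errors. *)
Lemma quad_gap_div rd id X Y V P t : 0 < t -> 0 <= X -> 0 <= Y -> 0 <= V -> 0 <= P ->
  Rabs rd <= X + t * V / 2 -> Y - t * P / 2 <= Rabs id ->
  (rd ^ 2 - id ^ 2) / t <= (2 * X ^ 2 - Y ^ 2) / t + t * V ^ 2 / 2 + Y * P.
Proof.
  intros Ht HX HY HV HP Hrd Hid.
  assert (0 <= t * V / 2) by (apply Rmult_le_pos; [apply Rmult_le_pos|]; lra).
  assert (0 <= t * P / 2) by (apply Rmult_le_pos; [apply Rmult_le_pos|]; lra).
  pose proof (sq_le_twice _ _ _ Hrd HX ltac:(lra)) as Hrd2.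
  pose proof (sq_ge_gap _ _ _ Hid HY ltac:(lra)) as Hid2.
  replace ((2 * X ^ 2 - Y ^ 2) / t + t * V ^ 2 / 2 + Y * P)
    with ((2 * X ^ 2 + 2 * (t * V / 2) ^ 2 - (Y ^ 2 - 2 * Y * (t * P / 2))) / t) by (field; lra).
  unfold Rdiv. apply Rmult_le_compat_r; [left; apply Rinv_0_lt_compat; lra|lra].
Qed.

Lemma le_div_of_bound S T t C : 0 < t -> t <= C -> 0 <= S -> C * S <= T -> S <= T / t.
Proof.
  intros Ht HtC HS HT. apply (Rmult_le_reg_l t); [lra|].
  replace (t * (T / t)) with T by (field; lra). nra.
Qed.

Lemma young_div b d t : 0 < t -> b * d <= d ^ 2 / (4 * t) + t * b ^ 2.
Proof.
  intros Ht. apply (Rmult_le_reg_l (4 * t)); [lra|].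
  replace (4 * t * (d ^ 2 / (4 * t) + t * b ^ 2)) with (d ^ 2 + 4 * t ^ 2 * b ^ 2) by (field; lra).
  pose proof (pow2_ge_0 (d - 2 * t * b)). nra.
Qed.

(* Absorption for part (i): every error is [O(a^72)] or [O(a^72 / t)], against the
   main term [- a^80 / (4 t)]. *)
Lemma absorb_near a t C S : 0 < t -> t <= C -> 1 <= a -> 0 <= S ->
  20 * C * S <= a ^ 8 -> 10 * (C + 3) <= a ^ 8 ->
  S * a ^ 72 + ((C + 3) * a ^ 72 - a ^ 80 / 4) / t <= - (a ^ 80 / (10 * t)).
Proof.
  intros Ht HtC Ha HS H1 H2.
  assert (Hp : 0 <= a ^ 72) by (apply pow_le; lra).
  assert (HS' : S * a ^ 72 <= a ^ 80 / 20 / t).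
  { apply (le_div_of_bound _ _ t C); auto; [apply Rmult_le_pos; auto|].
    replace (a ^ 80) with (a ^ 8 * a ^ 72) by ring. nra. }
  assert ((C + 3) * a ^ 72 <= a ^ 80 / 10) by (replace (a ^ 80) with (a ^ 8 * a ^ 72) by ring; nra).
  assert (Hdiv : ((C + 3) * a ^ 72 - a ^ 80 / 4) / t <= (a ^ 80 / 10 - a ^ 80 / 4) / t).
  { unfold Rdiv. apply Rmult_le_compat_r; [left; apply Rinv_0_lt_compat|]; lra. }
  replace (- (a ^ 80 / (10 * t))) with (a ^ 80 / 20 / t + (a ^ 80 / 10 - a ^ 80 / 4) / t) by (field; lra).
  lra.
Qed.

(* Absorption for part (ii): the errors are dominated by [D^2 / (2 t)] once [|D| >= a^40]. *)
Lemma absorb_far a t C S b X D : 0 < t -> t <= C -> 1 <= a -> 0 <= S -> 0 <= b ->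
  0 <= X <= (C + 2) * a ^ 15 -> a ^ 40 <= Rabs D ->
  16 * (C + 2) ^ 2 <= a ^ 50 -> 8 * C * S <= a ^ 20 ->
  S * a ^ 60 + b * Rabs D + (2 * X ^ 2 - D ^ 2) / t <= C * b ^ 2 - 1 / (2 * t) * D ^ 2.
Proof.
  intros Ht HtC Ha HS Hb HX HD H1 H2.
  assert (HD2 : a ^ 80 <= D ^ 2).
  { rewrite <- pow2_abs. replace (a ^ 80) with ((a ^ 40) ^ 2) by ring.
    apply pow_incr. split; [apply pow_le; lra|auto]. }
  assert (HX2 : 2 * X ^ 2 <= D ^ 2 / 8).
  { assert (X ^ 2 <= (C + 2) ^ 2 * a ^ 30)
      by (replace ((C + 2) ^ 2 * a ^ 30) with (((C + 2) * a ^ 15) ^ 2) by ring; apply pow_incr; lra).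
    assert (0 <= a ^ 30) by (apply pow_le; lra).
    replace (a ^ 80) with (a ^ 50 * a ^ 30) in HD2 by ring. nra. }
  assert (HSa : S * a ^ 60 <= D ^ 2 / 8 / t).
  { apply (le_div_of_bound _ _ t C); auto; [apply Rmult_le_pos; auto; apply pow_le; lra|].
    assert (0 <= a ^ 60) by (apply pow_le; lra).
    replace (a ^ 80) with (a ^ 20 * a ^ 60) in HD2 by ring. nra. }
  pose proof (young_div b (Rabs D) t Ht) as Hy. rewrite pow2_abs in Hy.
  assert (t * b ^ 2 <= C * b ^ 2) by (apply Rmult_le_compat_r; [apply pow2_ge_0|lra]).
  assert ((2 * X ^ 2 - D ^ 2) / t <= (D ^ 2 / 8 - D ^ 2) / t).
  { unfold Rdiv. apply Rmult_le_compat_r; [left; apply Rinv_0_lt_compat|]; lra. }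
  replace (C * b ^ 2 - 1 / (2 * t) * D ^ 2)
    with (C * b ^ 2 + D ^ 2 / 8 / t + D ^ 2 / (4 * t) + (D ^ 2 / 8 - D ^ 2) / t) by (field; lra).
  lra.
Qed.

Section Estimates.

Variables (alpha : C) (m : nat) (Q : R) (k : nat) (om : nat -> R) (mu : nat -> C) (Cc : R).
Hypothesis alpha_neq0 : alpha <> 0%C.
Hypothesis om_pos : forall i, (i < k)%nat -> 0 < om i.
Hypothesis Re_mu_nonneg : forall i, (i < k)%nat -> 0 <= Re (mu i).
Hypothesis Cc_pos : 0 < Cc.

Definition LQ : R := Rabs (ln Q).
Definition Wsum : R := Rsum k om.
Definition R0 : R := LQ + Rsum k (fun i => om i * Rabs (ln (om i))) + Wsum * ln (Cc + 1).
(* [|Re J_t(s) - Re s| <= |t| R1 a / 2] at height [Im s = a^60]. *)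
Definition R1 : R := R0 + 60 * Wsum.
(* Above height [Mmu] every [omega_i z + mu_i] has imaginary part [>= 1]. *)
Definition Mmu : R := Rsum k (fun i => (1 + Rabs (Im (mu i))) / om i).
(* Near [s], [|prod Gamma (omega_i z + mu_i)| <= exp (3 Gnear a^72 + k)]. *)
Definition Gnear : R := Rsum k (fun i => (om i * (Cc + 1) + Rabs (Re (mu i)) + 2) ^ 2).
(* The Gamma product on the line [Re z = 2] is at most [exp Gfar]. *)
Definition Gfar : R :=
  Rsum k (fun i => gamma_exponent (om i * 2 + Re (mu i)) (Rmin 1 (om i * 2 + Re (mu i))) + 1).
(* The coefficients of the [a^72] (part (i)) and [a^60] (part (ii)) error terms. *)
Definition Snear : R := 2 * INR m * (Cc + 4) + LQ * (Cc + 1) + 3 * Gnear + Cc * R1 ^ 2 + Wsum * PI / 2.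
Definition Sfar : R := 2 * INR m + Cc * R1 ^ 2.
(* The height [a = y^(1/60)] beyond which all absorptions work. *)
Definition height0 : R :=
  5 + 2 * Mmu + 10 * (Cc + 3) + 20 * Cc * Snear + 16 * (Cc + 2) ^ 2 + 8 * Cc * Sfar.
(* [ln K], covering the constant terms of both parts. *)
Definition lnK : R :=
  Rmax (ln (Cmod alpha) + INR k)
       (ln (Cmod alpha) + 2 * LQ + Gfar + 4 * INR m + Cc * (Wsum * PI + 2 * INR m) ^ 2).

Lemma Wsum_nonneg : 0 <= Wsum.
Proof. apply Rsum_nonneg. intros i Hi. left; auto. Qed.

Lemma R0_nonneg : 0 <= R0.
Proof.
  unfold R0, LQ. pose proof Wsum_nonneg. pose proof (Rabs_pos (ln Q)).
  assert (0 <= Rsum k (fun i => om i * Rabs (ln (om i)))).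
  { apply Rsum_nonneg. intros i Hi. apply Rmult_le_pos; [left; auto|apply Rabs_pos]. }
  assert (Hl : 0 <= ln (Cc + 1)) by (rewrite <- ln_1; apply ln_le; lra).
  pose proof (Rmult_le_pos _ _ Wsum_nonneg Hl). lra.
Qed.

Lemma R1_nonneg : 0 <= R1.
Proof. unfold R1. pose proof R0_nonneg. pose proof Wsum_nonneg. lra. Qed.

Lemma Gnear_nonneg : 0 <= Gnear.
Proof. apply Rsum_nonneg. intros. apply pow2_ge_0. Qed.

Lemma Snear_nonneg : 0 <= Snear.
Proof.
  unfold Snear, LQ. pose proof (pos_INR m). pose proof (Rabs_pos (ln Q)).
  pose proof Gnear_nonneg. pose proof Wsum_nonneg. pose proof PI_RGT_0. pose proof (pow2_ge_0 R1).
  assert (0 <= Wsum * PI) by (apply Rmult_le_pos; lra). nra.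
Qed.

Lemma Sfar_nonneg : 0 <= Sfar.
Proof. unfold Sfar. pose proof (pos_INR m). pose proof (pow2_ge_0 R1). nra. Qed.

Lemma height0_large a : height0 <= a ->
  1 <= a /\ Mmu <= a ^ 60 / 2 /\ 4 <= a ^ 20 /\ 10 * (Cc + 3) <= a ^ 8 /\
  20 * Cc * Snear <= a ^ 8 /\ 16 * (Cc + 2) ^ 2 <= a ^ 50 /\ 8 * Cc * Sfar <= a ^ 20.
Proof.
  intros Ha. unfold height0 in Ha.
  pose proof (Rmult_le_pos _ _ (Rlt_le _ _ Cc_pos) Snear_nonneg).
  pose proof (Rmult_le_pos _ _ (Rlt_le _ _ Cc_pos) Sfar_nonneg).
  pose proof (pow2_ge_0 (Cc + 2)).
  assert (0 <= Mmu).
  { apply Rsum_nonneg. intros i Hi. pose proof (om_pos i Hi). pose proof (Rabs_pos (Im (mu i))).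
    apply Rdiv_le_0_compat; lra. }
  assert (Ha1 : 1 <= a) by lra.
  pose proof (pow_ge_self a 8 Ha1 ltac:(lia)). pose proof (pow_ge_self a 20 Ha1 ltac:(lia)).
  pose proof (pow_ge_self a 50 Ha1 ltac:(lia)). pose proof (pow_ge_self a 60 Ha1 ltac:(lia)).
  repeat split; lra.
Qed.

Lemma gamma_product_near a z : 1 <= a -> Mmu <= Im z -> Rabs (Re z) <= (Cc + 1) * a ^ 36 ->
  Cmod (Cprod k (fun i => CGamma (RtoC (om i) * z + mu i))) <= exp (3 * Gnear * a ^ 72 + INR k).
Proof.
  intros Ha HIm HRe.
  set (ci := fun i => om i * (Cc + 1) + Rabs (Re (mu i)) + 2).
  replace (3 * Gnear * a ^ 72 + INR k) with (Rsum k (fun i => 3 * a ^ 72 * ci i ^ 2 + 1))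
    by (rewrite Rsum_plus, Rsum_scal, Rsum_const; unfold Gnear, ci; ring).
  apply Cprod_le_exp. intros i Hi. pose proof (om_pos i Hi) as Hoi.
  eapply Rle_trans; [apply CGamma_bound_upper|].
  - replace (Im (RtoC (om i) * z + mu i)) with (om i * Im z + Im (mu i)) by (unfold Im; simpl; ring).
    assert ((1 + Rabs (Im (mu i))) / om i <= Im z).
    { eapply Rle_trans; [|exact HIm]. apply (Rsum_term_le k (fun i => (1 + Rabs (Im (mu i))) / om i)); auto.
      intros j Hj. pose proof (om_pos j Hj). pose proof (Rabs_pos (Im (mu j))). apply Rdiv_le_0_compat; lra. }
    assert (1 + Rabs (Im (mu i)) <= om i * Im z).
    { replace (1 + Rabs (Im (mu i))) with (om i * ((1 + Rabs (Im (mu i))) / om i)) by (field; lra).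
      apply Rmult_le_compat_l; lra. }
    pose proof (Rle_abs (- Im (mu i))). rewrite Rabs_Ropp in *. lra.
  - apply exp_le_exp.
    replace (Re (RtoC (om i) * z + mu i)) with (om i * Re z + Re (mu i)) by (unfold Re; simpl; ring).
    assert (Hp : 1 <= a ^ 36) by (pose proof (pow_ge_self a 36 Ha ltac:(lia)); lra).
    assert (Rabs (om i * Re z + Re (mu i)) + 2 <= ci i * a ^ 36).
    { pose proof (Rabs_triang (om i * Re z) (Re (mu i))) as Htr.
      rewrite Rabs_mult, (Rabs_pos_eq (om i)) in Htr by lra.
      pose proof (Rabs_pos (Re (mu i))). unfold ci. nra. }
    assert ((Rabs (om i * Re z + Re (mu i)) + 2) ^ 2 <= (ci i * a ^ 36) ^ 2)
      by (apply pow_incr; pose proof (Rabs_pos (om i * Re z + Re (mu i))); lra).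
    replace ((ci i * a ^ 36) ^ 2) with (a ^ 72 * ci i ^ 2) in * by ring. lra.
Qed.

Lemma gamma_product_far z : Re z = 2 ->
  Cmod (Cprod k (fun i => CGamma (RtoC (om i) * z + mu i))) <= exp Gfar.
Proof.
  intros Hz. unfold Gfar. apply Cprod_le_exp. intros i Hi.
  assert (Hw : Re (RtoC (om i) * z + mu i) = om i * 2 + Re (mu i))
    by (unfold Re in *; simpl; rewrite Hz; ring).
  rewrite <- Hw. apply CGamma_bound_right. rewrite Hw.
  pose proof (om_pos i Hi). pose proof (Re_mu_nonneg i Hi). lra.
Qed.

(* The regime of the theorem at height [Im s = a^60], i.e. [a = y^(1/60)]. *)
Section AtHeight.

Variables (t : R) (s : C) (n : nat) (a : R).
Hypothesis t_neg : t < 0.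
Hypothesis t_bound : Rabs t <= Cc.
Hypothesis a_large : height0 <= a.
Hypothesis Im_s : Im s = a ^ 60.
Hypothesis Re_s : Rabs (Re s) <= Cc * a ^ 15.
Hypothesis n_pos : (1 <= n)%nat.
Hypothesis ln_n : ln (INR n) <= a ^ 36 / Rabs t.

Lemma tau_pos : 0 < Rabs t.
Proof. apply Rabs_pos_lt. lra. Qed.

Lemma a_ge_1 : 1 <= a.
Proof. apply (height0_large a a_large). Qed.

Lemma Re_J_close : Rabs (Re (J Q k om t s) - Re s) <= Rabs t * (R1 * a) / 2.
Proof.
  pose proof a_ge_1 as Ha.
  assert (Hp60 : a <= a ^ 60) by (apply pow_ge_self; auto; lia).
  assert (Hs1 : 1 <= Cmod s).
  { pose proof (im_le_Cmod s) as H. rewrite Im_s, Rabs_pos_eq in H; lra. }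
  assert (Hs2 : Cmod s <= (Cc + 1) * a ^ 60).
  { pose proof (Cmod_le_sum s) as H. rewrite Im_s, (Rabs_pos_eq (a ^ 60)) in H by lra.
    assert (Cc * a ^ 15 <= Cc * a ^ 60) by (apply Rmult_le_compat_l; [lra|apply Rle_pow; auto; lia]). lra. }
  assert (Hlns : ln (Cmod s) <= ln (Cc + 1) + 60 * a).
  { apply Rle_trans with (ln ((Cc + 1) * a ^ 60)); [apply ln_le; lra|].
    rewrite ln_mult, ln_pow by (try apply pow_lt; lra).
    pose proof (ln_le_id a ltac:(lra)). simpl INR. lra. }
  eapply Rle_trans; [apply Re_J_shift_bound; auto|]. fold LQ Wsum.
  pose proof Wsum_nonneg. pose proof (Rabs_pos t). pose proof R0_nonneg.
  assert (Wsum * ln (Cmod s) <= Wsum * (ln (Cc + 1) + 60 * a)) by (apply Rmult_le_compat_l; auto).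
  assert (R0 <= R0 * a) by nra.
  assert (LQ + Rsum k (fun i => om i * Rabs (ln (om i))) + Wsum * ln (Cmod s) <= R1 * a)
    by (unfold R1, R0 in *; nra).
  replace (Rabs t * (R1 * a) / 2) with (Rabs t / 2 * (R1 * a)) by field.
  apply Rmult_le_compat_l; lra.
Qed.

Lemma Im_J_close : Rabs (Im (J Q k om t s) - Im s) <= Rabs t * (Wsum * PI) / 2.
Proof.
  replace (Rabs t * (Wsum * PI) / 2) with (Rabs t / 2 * Wsum * PI) by field.
  apply Im_J_shift_bound; auto. rewrite Im_s. apply pow_le. pose proof a_ge_1. lra.
Qed.

(* The Gaussian term at [z]: with [|Re s - Re z| <= X] and [|Im s - Im z| >= Y], the
   shift [J - s] only costs the errors [Cc R1^2 a^2] and [Y W pi]. *)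
Lemma gaussian_term z X Y : 0 <= X -> 0 <= Y ->
  Rabs (Re s - Re z) <= X -> Y <= Rabs (Im s - Im z) ->
  ((Re (J Q k om t s) - Re z) ^ 2 - (Im (J Q k om t s) - Im z) ^ 2) / Rabs t
    <= (2 * X ^ 2 - Y ^ 2) / Rabs t + Cc * R1 ^ 2 * a ^ 2 + Y * (Wsum * PI).
Proof.
  intros HX HY Hre Him.
  pose proof tau_pos as Htau. pose proof R1_nonneg. pose proof Wsum_nonneg. pose proof PI_RGT_0.
  pose proof a_ge_1.
  eapply Rle_trans; [apply (quad_gap_div _ _ X Y (R1 * a) (Wsum * PI)); auto; try nra|].
  - pose proof (Rabs_sub_triang (Re (J Q k om t s)) (Re s) (Re z)). pose proof Re_J_close. lra.
  - pose proof (Rabs_sub_triang (Im s) (Im (J Q k om t s)) (Im z)). pose proof Im_J_close as HIm.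
    rewrite Rabs_minus_sym in HIm. lra.
  - assert (Rabs t * (R1 * a) ^ 2 / 2 <= Cc * R1 ^ 2 * a ^ 2).
    { replace ((R1 * a) ^ 2) with (R1 ^ 2 * a ^ 2) by ring.
      pose proof (Rmult_le_pos _ _ (pow2_ge_0 R1) (pow2_ge_0 a)). nra. }
    lra.
Qed.

Lemma z_near_bounds z :
  Rabs (Re s - Re z) <= a ^ 36 -> a ^ 40 / 2 <= Rabs (Im s - Im z) <= 2 * a ^ 40 ->
  Rabs (Re z) <= (Cc + 1) * a ^ 36 /\ a ^ 60 / 2 <= Im z /\ Cmod z <= (Cc + 4) * a ^ 72.
Proof.
  intros Hre Him. destruct (height0_large a a_large) as (Ha & _ & Ha20 & _).
  assert (Cc * a ^ 15 <= Cc * a ^ 36) by (apply Rmult_le_compat_l; [lra|apply Rle_pow; auto; lia]).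
  assert (HRez : Rabs (Re z) <= (Cc + 1) * a ^ 36) by (pose proof (Rabs_le_shift (Re s) (Re z)); lra).
  assert (HImz : a ^ 60 / 2 <= Im z <= 3 * a ^ 60).
  { pose proof (Rle_abs (Im s - Im z)). pose proof (Rle_abs (- (Im s - Im z))) as Hneg.
    rewrite Rabs_Ropp in Hneg. replace (a ^ 60) with (a ^ 20 * a ^ 40) by ring.
    assert (4 * a ^ 40 <= a ^ 20 * a ^ 40) by (apply Rmult_le_compat_r; [apply pow_le|]; lra). lra. }
  repeat split; try lra.
  pose proof (Cmod_le_sum z). rewrite (Rabs_pos_eq (Im z)) in * by (pose proof (pow_le a 60); lra).
  assert (a ^ 36 <= a ^ 72) by (apply Rle_pow; auto; lia).
  assert (a ^ 60 <= a ^ 72) by (apply Rle_pow; auto; lia).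
  nra.
Qed.

(* Part (i): near [s], at vertical distance [~ y^(2/3)], the Gaussian factor wins. *)
Lemma integrand_bound_near z :
  Rabs (Re s - Re z) <= a ^ 36 ->
  a ^ 40 / 2 <= Rabs (Im s - Im z) <= 2 * a ^ 40 ->
  Cmod (integrandI alpha m Q k om mu t s n z) <= exp lnK * exp (- (a ^ 80 / (10 * Rabs t))).
Proof.
  intros Hre Him.
  destruct (height0_large a a_large) as (Ha & HMmu & _ & HA1 & HA2 & _ & _).
  destruct (z_near_bounds z Hre Him) as (HRez & HImz & Hcz).
  assert (H2 : a ^ 2 <= a ^ 72) by (apply Rle_pow; auto; lia).
  assert (H36 : a ^ 36 <= a ^ 72) by (apply Rle_pow; auto; lia).
  assert (H40 : a ^ 40 <= a ^ 72) by (apply Rle_pow; auto; lia).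
  pose proof tau_pos as Htau. pose proof R1_nonneg. pose proof Wsum_nonneg. pose proof PI_RGT_0.
  eapply Rle_trans.
  { apply integrand_log_bound; [auto|lra|]. apply (gamma_product_near a); lra. }
  rewrite <- exp_plus. apply exp_le_exp.
  pose proof (gaussian_term z (a ^ 36) (a ^ 40 / 2) ltac:(apply pow_le; lra)
                ltac:(pose proof (pow_le a 40); lra) Hre ltac:(lra)) as Hgauss.
  assert (Herr : Cc * R1 ^ 2 * a ^ 2 + a ^ 40 / 2 * (Wsum * PI) <= (Cc * R1 ^ 2 + Wsum * PI / 2) * a ^ 72).
  { pose proof (Rmult_le_pos _ _ (Rlt_le _ _ Cc_pos) (pow2_ge_0 R1)).
    assert (0 <= Wsum * PI) by nra. nra. }
  assert (Hpoly : 2 * INR m * Cmod z <= 2 * INR m * (Cc + 4) * a ^ 72) by (pose proof (pos_INR m); nra).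
  assert (HQ : Re z * ln Q <= LQ * (Cc + 1) * a ^ 72).
  { pose proof (Rle_abs (Re z * ln Q)) as Hab. rewrite Rabs_mult in Hab. fold LQ in Hab.
    assert (HLQ : 0 <= LQ) by apply Rabs_pos.
    assert (Rabs (Re z) <= (Cc + 1) * a ^ 72) by nra. nra. }
  assert (Hn : - (Re z * ln (INR n)) <= (Cc + 1) * a ^ 72 / Rabs t).
  { pose proof (ln_nat_nonneg n n_pos). pose proof (Rle_abs (- Re z)). rewrite Rabs_Ropp in *.
    apply Rle_trans with (Rabs (Re z) * ln (INR n)); [nra|].
    replace ((Cc + 1) * a ^ 72 / Rabs t) with ((Cc + 1) * a ^ 36 * (a ^ 36 / Rabs t)) by (field; lra).
    apply Rmult_le_compat; auto; apply Rabs_pos. }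
  pose proof (absorb_near a (Rabs t) Cc Snear Htau t_bound Ha Snear_nonneg HA2 HA1) as Habsorb.
  replace ((2 * (a ^ 36) ^ 2 - (a ^ 40 / 2) ^ 2) / Rabs t)
    with (((Cc + 3) * a ^ 72 - a ^ 80 / 4) / Rabs t - (Cc + 1) * a ^ 72 / Rabs t) in Hgauss by (field; lra).
  pose proof (Rmax_l (ln (Cmod alpha) + INR k)
    (ln (Cmod alpha) + 2 * LQ + Gfar + 4 * INR m + Cc * (Wsum * PI + 2 * INR m) ^ 2)).
  unfold lnK, Snear in *. lra.
Qed.

Lemma integrand_bound_far z :
  Re z = 2 -> a ^ 40 <= Rabs (Im s - Im z) ->
  Cmod (integrandI alpha m Q k om mu t s n z)
    <= exp lnK * exp (- (1 / (2 * Rabs t) * (Im s - Im z) ^ 2)).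
Proof.
  intros Hz HD. set (D := Im s - Im z) in *.
  destruct (height0_large a a_large) as (Ha & _ & _ & _ & _ & HA3 & HA4).
  assert (H15 : 1 <= a ^ 15) by (pose proof (pow_ge_self a 15 Ha ltac:(lia)); lra).
  assert (H2 : a ^ 2 <= a ^ 60) by (apply Rle_pow; auto; lia).
  assert (Hcz : Cmod z <= 2 + a ^ 60 + Rabs D).
  { pose proof (Cmod_le_sum z) as Hsum. pose proof (Rabs_le_shift (Im s) (Im z)) as Hshift.
    fold D in Hshift. rewrite Hz, Rabs_pos_eq in Hsum by lra.
    rewrite Im_s, (Rabs_pos_eq (a ^ 60)) in Hshift by (apply pow_le; lra). lra. }
  assert (Hre : Rabs (Re s - Re z) <= Cc * a ^ 15 + 2).
  { rewrite Hz. apply Rabs_le. pose proof (Rle_abs (Re s)). pose proof (Rle_abs (- Re s)) as Hneg.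
    rewrite Rabs_Ropp in Hneg. lra. }
  pose proof tau_pos as Htau. pose proof R1_nonneg. pose proof Wsum_nonneg. pose proof PI_RGT_0.
  eapply Rle_trans.
  { apply integrand_log_bound; [auto|lra|apply gamma_product_far; auto]. }
  rewrite <- exp_plus. apply exp_le_exp.
  pose proof (gaussian_term z (Cc * a ^ 15 + 2) (Rabs D) ltac:(nra) (Rabs_pos D) Hre (Rle_refl _))
    as Hgauss.
  rewrite pow2_abs in Hgauss.
  assert (Herr : Cc * R1 ^ 2 * a ^ 2 <= Cc * R1 ^ 2 * a ^ 60).
  { pose proof (Rmult_le_pos _ _ (Rlt_le _ _ Cc_pos) (pow2_ge_0 R1)). nra. }
  assert (Hpoly : 2 * INR m * Cmod z <= 4 * INR m + 2 * INR m * a ^ 60 + 2 * INR m * Rabs D)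
    by (pose proof (pos_INR m); nra).
  assert (HQ : Re z * ln Q <= 2 * LQ) by (rewrite Hz; pose proof (Rle_abs (ln Q)); unfold LQ; lra).
  assert (Hn : - (Re z * ln (INR n)) <= 0) by (rewrite Hz; pose proof (ln_nat_nonneg n n_pos); lra).
  pose proof (absorb_far a (Rabs t) Cc Sfar (Wsum * PI + 2 * INR m) (Cc * a ^ 15 + 2) D
    Htau t_bound Ha Sfar_nonneg ltac:(pose proof (pos_INR m); nra) ltac:(split; nra) HD HA3 HA4) as Habsorb.
  pose proof (Rmax_r (ln (Cmod alpha) + INR k)
    (ln (Cmod alpha) + 2 * LQ + Gfar + 4 * INR m + Cc * (Wsum * PI + 2 * INR m) ^ 2)).
  unfold lnK, Sfar in *. lra.
Qed.

End AtHeight.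

End Estimates.

(** * Passing to the height [a = y^(1/60)] *)

(* All exponents of [y] in the theorem are multiples of [1/60]. *)
Lemma Rpower_sixtieth y (N : nat) e : 0 < y -> e = INR N / 60 -> Rpower y e = Rpower y (1 / 60) ^ N.
Proof.
  intros Hy ->. rewrite <- Rpower_pow by (unfold Rpower; apply exp_pos).
  rewrite Rpower_mult. f_equal. field.
Qed.

Lemma le_Rpower_sixtieth A y : 0 < A -> A ^ 60 <= y -> A <= Rpower y (1 / 60).
Proof.
  intros HA Hy. replace A with (Rpower (A ^ 60) (1 / 60)) at 1.
  - apply Rle_Rpower_l; [lra|]. split; [apply pow_lt|]; auto.
  - rewrite <- Rpower_pow, Rpower_mult by lra. replace (INR 60 * (1 / 60)) with 1 by (simpl; field).
    apply Rpower_1; lra.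
Qed.

Theorem mainTheorem14 :
  forall (F : C -> C) (alpha : C) (m : nat) (Q : R) (k : nat)
         (omega : nat -> R) (mu : nat -> C),
  in_Ssharp F alpha m Q k omega mu ->
  forall Cc : R, 0 < Cc ->
  exists y0 K : R, 0 < y0 /\ 0 < K /\
  forall (t : R) (s : C) (n : nat),
    t < 0 -> Rabs t <= Cc ->
    0 < Im s -> Rabs (Re s) <= Cc * Rpower (Im s) (1/4) ->
    (1 <= n)%nat -> INR n <= exp (Rpower (Im s) (3/5) / Rabs t) ->
    y0 <= Im s ->
    (forall z : C,
        Rabs (Re s - Re z) <= Rpower (Im s) (3/5) ->
        1/2 * Rpower (Im s) (2/3) <= Rabs (Im s - Im z) <= 2 * Rpower (Im s) (2/3) ->
        Cmod (integrandI alpha m Q k omega mu t s n z)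
          <= K * exp (- (Rpower (Im s) (4/3) / (10 * Rabs t)))) /\
    (forall z : C,
        Re z = 2 ->
        Rpower (Im s) (2/3) <= Rabs (Im s - Im z) ->
        Cmod (integrandI alpha m Q k omega mu t s n z)
          <= K * exp (- (1 / (2 * Rabs t) * (Im s - Im z) ^ 2))).
Proof.
  intros F alpha m Q k om mu (_ & _ & _ & Halpha & _ & _ & Hom & _) Cc HCc.
  assert (Homp : forall i, (i < k)%nat -> 0 < om i) by (intros i Hi; apply Hom; auto).
  assert (Hmu : forall i, (i < k)%nat -> 0 <= Re (mu i)) by (intros i Hi; apply Hom; auto).
  assert (H0 : 1 <= height0 m Q k om mu Cc)
    by (apply (height0_large m Q k om mu Cc Homp HCc), Rle_refl).
  exists (height0 m Q k om mu Cc ^ 60), (exp (lnK alpha m Q k om mu Cc)).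
  split; [apply pow_lt; lra|]. split; [apply exp_pos|].
  intros t s n Ht HtC Hy Hx Hn1 Hn Hy0.
  set (a := Rpower (Im s) (1 / 60)).
  assert (Hpow : forall N e, e = INR N / 60 -> Rpower (Im s) e = a ^ N)
    by (intros; apply Rpower_sixtieth; auto).
  assert (Hya : Im s = a ^ 60) by (rewrite <- (Hpow 60%nat 1), Rpower_1; [reflexivity|lra|simpl; field]).
  rewrite (Hpow 15%nat (1/4)) in Hx by (simpl; field). rewrite (Hpow 36%nat (3/5)) in Hn by (simpl; field).
  rewrite (Hpow 36%nat (3/5)), (Hpow 40%nat (2/3)), (Hpow 80%nat (4/3)) by (simpl; field).
  assert (Hln : ln (INR n) <= a ^ 36 / Rabs t).
  { rewrite <- (ln_exp (a ^ 36 / Rabs t)). apply ln_le; auto. apply lt_0_INR; lia. }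
  assert (Ha : height0 m Q k om mu Cc <= a) by (apply le_Rpower_sixtieth; lra).
  split.
  - intros z Hre Him. eapply integrand_bound_near; eauto. lra.
  - intros z Hre Him. eapply integrand_bound_far; eauto.
Qed.
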